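(* Let $\Bbbk$ be a field, $n$ a positive integer, and $\mathbb{F}=\Bbbk[\xi]\simeq\Bbbk[x]/(f(x))$ a quadratic field extension where $\xi$ is a root of the irreducible polynomial $f$, which is either $f(x)=x^2+\tau$ or $f(x)=x^2+x+\tau$ with $\tau\in\Bbbk$. Let $Z=A+\xi B$ and $W=C+\xi D$ be in $M_n(\mathbb{F})$ with $A,B,C,D\in M_n(\Bbbk)$. If $f(x)=x^2+\tau$, then $ZW=N_1+\xi N_2$ where $M_1=(A-B)(C+\tau D)$, $M_2=AD$, $M_3=BC$, $N_1=M_1-\tau M_2+M_3$, $N_2=M_2+M_3$. If $f(x)=x^2+x+\tau$, then $ZW=N_1+\xi N_2$ where $M_1=AC$, $M_2=BD$, $M_3=(A-B)(C-D)$, $N_1=M_1-\tau M_2$, $N_2=M_1-M_3$. Moreover, these two algorithms are optimal in the sense of the minimum number of multiplications in $M_n(\Bbbk)$: among all algorithms computing the product map $M_n(\mathbb{F})\times M_n(\mathbb{F})\to M_n(\mathbb{F})$ using multiplications and additions of the indeterminate matrices together with scalar multiplications, none uses fewer than three multiplications in $M_n(\Bbbk)$.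
   Context: $M_n(\mathbb{L})$ denotes the algebra of $n\times n$ matrices over a field $\mathbb{L}$. Since $M_n(\mathbb{F})=M_n(\Bbbk)\otimes_\Bbbk\mathbb{F}$, every $Z\in M_n(\mathbb{F})$ is uniquely written $A+\xi B$ with $A,B\in M_n(\Bbbk)$. A multiplication in $M_n(\Bbbk)$ is a product of a linear combination of $A,B$ with a linear combination of $C,D$. *)

From HB Require Import structures.
From mathcomp Require Import all_boot all_order all_algebra all_field.
Set Implicit Arguments. Unset Strict Implicit. Unset Printing Implicit Defensive.
Import GRing.Theory.
Local Open Scope ring_scope.

Definition quad_poly (K : fieldType) (b : bool) (tau : K) : {poly K} :=
  if b then 'X^2 + tau%:P else 'X^2 + 'X + tau%:P.

Definition liftmx (K : fieldType) (L : fieldExtType K) (n : nat)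
  (A : 'M[K]_n) : 'M[L]_n := map_mx (in_alg L) A.

Definition alg_N1 (K : fieldType) (b : bool) (tau : K) (n : nat)
  (A B C D : 'M[K]_n) : 'M[K]_n :=
  if b then
    let M1 := (A - B) *m (C + tau *: D) in
    let M2 := A *m D in let M3 := B *m C in
    M1 - tau *: M2 + M3
  else
    let M1 := A *m C in let M2 := B *m D in
    M1 - tau *: M2.

Definition alg_N2 (K : fieldType) (b : bool) (tau : K) (n : nat)
  (A B C D : 'M[K]_n) : 'M[K]_n :=
  if b then
    let M2 := A *m D in let M3 := B *m C in M2 + M3
  else
    let M1 := A *m C in let M3 := (A - B) *m (C - D) in M1 - M3.

(* A bilinear algorithm with r multiplications in M_n(k):
   M_i = (al_i A + be_i B)(ga_i C + de_i D), i < r, and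
   ZW = N1 + xi N2 with N1 = sum_i u_i M_i, N2 = sum_i v_i M_i,
   for all A B C D in M_n(k) (Z = A + xi B, W = C + xi D). *)
Definition computes_product (K : fieldType) (L : fieldExtType K) (xi : L)
  (n r : nat) (al be ga de u v : 'I_r -> K) : Prop :=
  forall A B C D : 'M[K]_n,
    let M i := (al i *: A + be i *: B) *m (ga i *: C + de i *: D) in
    (liftmx L A + xi *: liftmx L B) *m (liftmx L C + xi *: liftmx L D)
    = liftmx L (\sum_(i < r) u i *: M i) + xi *: liftmx L (\sum_(i < r) v i *: M i).

(* With [e = 1] if f = x^2 + x + tau and [e = 0] if f = x^2 + tau, we have
   xi^2 = - tau - e xi, so (A + xi B)(C + xi D) has coordinates
   AC - tau BD and AD + BC - e BD on (1, xi); both algorithms compute these.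
   For optimality, suppose some algorithm uses at most two products M_0, M_1.
   Take (x, y) <> 0 annihilating the left factor of M_0 and (z, w) <> 0
   annihilating the right factor of M_1, and feed it the rank-one inputs
   A = xE, B = yE, C = zE, D = wE for a matrix unit E. Every M_i vanishes,
   so (x + xi y)(z + xi w) = 0 in the field F, which is impossible since
   xi is not in k. *)

From HB Require Import structures.
From mathcomp Require Import all_boot all_order all_algebra all_field.
From mathcomp Require Import ring zify.
Import GRing.Theory.
Local Open Scope ring_scope.
Set Implicit Arguments. Unset Strict Implicit. Unset Printing Implicit Defensive.

Lemma size_quad_poly (K : fieldType) (b : bool) (tau : K) :
  size (quad_poly b tau) = 3%N.
Proof.
rewrite /quad_poly; case: b; last by rewrite -addrA size_polyDl ?size_polyXn ?size_XaddC.
by rewrite size_polyDl ?size_polyXn // size_polyC; case: (tau != 0).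
Qed.

Lemma horner_map_quad_poly (K : fieldType) (L : fieldExtType K) b (tau : K) (xi : L) :
  (map_poly (in_alg L) (quad_poly b tau)).[xi] = xi ^+ 2 + (~~ b)%:R * xi + tau%:A.
Proof.
by rewrite /quad_poly; case: b; rewrite /= !rmorphD /= rmorphXn /= map_polyX map_polyC
  /= !hornerE.
Qed.

Lemma irredp_noroot (K : idomainType) (p : {poly K}) (c : K) :
  irreducible_poly p -> (2 < size p)%N -> ~~ root p c.
Proof.
move=> irr_p p_gt2; apply/negP; rewrite -dvdp_XsubCl => /(irr_p _).
by rewrite size_XsubC => /(_ isT) /eqp_size; rewrite size_XsubC => size_p; rewrite -size_p in p_gt2.
Qed.

Lemma alg_N1E (K : fieldType) b (tau : K) n (A B C D : 'M[K]_n) :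
  alg_N1 b tau A B C D = A *m C - tau *: (B *m D).
Proof.
rewrite /alg_N1; case: b => //=.
rewrite mulmxDr !mulmxBl -!scalemxAr.
move: (A *m C) (A *m D) (B *m C) (B *m D) => P Q R S.
by apply/matrixP => i j; rewrite !mxE; ring.
Qed.

Lemma alg_N2E (K : fieldType) b (tau : K) n (A B C D : 'M[K]_n) :
  alg_N2 b tau A B C D = A *m D + B *m C - (~~ b)%:R *: (B *m D).
Proof.
rewrite /alg_N2; case: b => /=; first by rewrite scale0r subr0.
rewrite mulmxBr !mulmxBl scale1r.
move: (A *m C) (A *m D) (B *m C) (B *m D) => P Q R S.
by apply/matrixP => i j; rewrite !mxE; ring.
Qed.

Lemma liftmx_mul_quad (K : fieldType) (L : fieldExtType K) (n : nat)
    (b : bool) (tau : K) (xi : L) (A B C D : 'M[K]_n) :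
  root (map_poly (in_alg L) (quad_poly b tau)) xi ->
  (liftmx L A + xi *: liftmx L B) *m (liftmx L C + xi *: liftmx L D)
  = liftmx L (A *m C - tau *: (B *m D))
    + xi *: liftmx L (A *m D + B *m C - (~~ b)%:R *: (B *m D)).
Proof.
rewrite /root horner_map_quad_poly => /eqP xi_root.
have tauE : tau%:A = - xi ^+ 2 - (~~ b)%:R * xi.
  by rewrite -[tau%:A]subr0 -xi_root; ring.
rewrite /liftmx !(map_mxD, map_mxB, map_mxN, map_mxZ, map_mxM) /=.
rewrite tauE scaler_nat mulmxDl !mulmxDr -!scalemxAl -!scalemxAr.
set a := map_mx _ A; set b' := map_mx _ B; set c := map_mx _ C; set d := map_mx _ D.
move: (a *m c) (a *m d) (b' *m c) (b' *m d) => P Q R S.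
by apply/matrixP => i j; rewrite !mxE; ring.
Qed.

Lemma lin2_common_kernel (K : fieldType) (I : finType) (P : {pred I}) (a c : I -> K) :
  (#|P| <= 1)%N ->
  exists x y : K, ((x != 0) || (y != 0)) /\ {in P, forall i, a i * x + c i * y = 0}.
Proof.
move=> /card_le1_eqP P_le1; have [i0 P_i0 | P0] := pickP P; last first.
  by exists 1, 0; split=> [|i]; rewrite ?oner_eq0 // unfold_in P0.
suff [x [y [nz_xy ker_xy]]] : exists x y : K, ((x != 0) || (y != 0)) /\ a i0 * x + c i0 * y = 0.
  by exists x, y; split=> // i P_i; rewrite (P_le1 i0 i).
have [/andP[/eqP-> /eqP->] | nz_ac] := boolP ((a i0 == 0) && (c i0 == 0)).
  by exists 1, 0; rewrite oner_eq0; split=> //; ring.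
exists (c i0), (- a i0); split; last by ring.
by rewrite oppr_eq0 orbC -negb_and.
Qed.

Lemma computes_product_rank_one (K : fieldType) (L : fieldExtType K) (xi : L)
    (n r : nat) (al be ga de u v : 'I_r -> K) (x y z w : K) :
  (0 < n)%N -> computes_product xi n al be ga de u v ->
  (forall i, al i * x + be i * y = 0 \/ ga i * z + de i * w = 0) ->
  (x%:A + y *: xi) * (z%:A + w *: xi) = 0.
Proof.
case: n => // n _ xi_alg kill.
pose E : 'M[K]_n.+1 := delta_mx ord0 ord0.
have M0 i : (al i *: (x *: E) + be i *: (y *: E)) *m (ga i *: (z *: E) + de i *: (w *: E)) = 0.
  by rewrite !scalerA -!scalerDl; case: (kill i) => ->; rewrite scale0r ?mul0mx ?mulmx0.
have := xi_alg (x *: E) (y *: E) (z *: E) (w *: E); rewrite /= !big1 => [|i _|i _]; [|by rewrite M0 scaler0..].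
rewrite /liftmx map_mx0 scaler0 addr0 !map_mxZ map_delta_mx !scalerA -!scalerDl.
rewrite -scalemxAl -scalemxAr scalerA mul_delta_mx !mulr_algr.
by move/matrixP/(_ ord0 ord0); rewrite !mxE eqxx mulr1.
Qed.

Section LowerBound.

Variables (K : fieldType) (L : fieldExtType K) (xi : L).
Hypothesis xi_notin_K : forall c : K, xi != c%:A.

Lemma algDZ_eq0 (x y : K) : (x%:A + y *: xi == 0) = (x == 0) && (y == 0).
Proof.
have [-> | nz_y] := eqVneq y 0; first by rewrite scale0r addr0 scaler_eq0 oner_eq0 orbF andbT.
rewrite andbF; apply: negbTE; apply: contra (xi_notin_K (- x / y)) => xy0.
have yxi : y *: xi = (- x)%:A by rewrite scaleNr; apply/eqP; rewrite -addr_eq0 addrC.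
by rewrite -[xi](scalerK nz_y) yxi scalerA mulrC.
Qed.

Lemma computes_product_ge3 (n r : nat) (al be ga de u v : 'I_r -> K) :
  (0 < n)%N -> computes_product xi n al be ga de u v -> (3 <= r)%N.
Proof.
move=> n_gt0 xi_alg; rewrite leqNgt; apply/negP => r_lt3.
have first_le1 : (#|[pred i : 'I_r | val i == 0%N]| <= 1)%N.
  by apply/card_le1_eqP => i j /eqP i0 /eqP j0; apply: val_inj; rewrite /= i0 j0.
have others_le1 : (#|[pred i : 'I_r | val i != 0%N]| <= 1)%N.
  apply/card_le1_eqP => i j; rewrite !inE /= => i0 j0; apply: val_inj => /=.
  by move: (ltn_ord i) (ltn_ord j) i0 j0 r_lt3; lia.
have [x [y [nz_xy ker_xy]]] := lin2_common_kernel al be first_le1.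
have [z [w [nz_zw ker_zw]]] := lin2_common_kernel ga de others_le1.
have kill i : al i * x + be i * y = 0 \/ ga i * z + de i * w = 0.
  have [i0 | i_neq0] := eqVneq (val i) 0%N; [left; apply: ker_xy | right; apply: ker_zw].
  - by rewrite inE /= i0.
  - by rewrite inE /= i_neq0.
have /negP[] : (x%:A + y *: xi) * (z%:A + w *: xi) != 0.
  by rewrite mulf_eq0 !algDZ_eq0 negb_or !negb_and nz_xy nz_zw.
by rewrite (computes_product_rank_one n_gt0 xi_alg kill).
Qed.

End LowerBound.

Unset Implicit Arguments.

Theorem proposition3p1 (K : fieldType) (L : fieldExtType K) (n : nat)
  (b : bool) (tau : K) (xi : L) :
  (0 < n)%N ->
  irreducible_poly (quad_poly b tau) ->
  root (map_poly (in_alg L) (quad_poly b tau)) xi ->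
  <<1%VS; xi>>%VS = fullv ->
  (forall A B C D : 'M[K]_n,
     (liftmx L A + xi *: liftmx L B) *m (liftmx L C + xi *: liftmx L D)
     = liftmx L (alg_N1 b tau A B C D) + xi *: liftmx L (alg_N2 b tau A B C D))
  /\
  (forall (r : nat) (al be ga de u v : 'I_r -> K),
     computes_product xi n al be ga de u v -> (3 <= r)%N).
Proof.
move=> n_gt0 irr_f f_xi _; split=> [A B C D | r al be ga de u v].
  by rewrite alg_N1E alg_N2E (liftmx_mul_quad _ _ _ _ f_xi).
have xi_notin_K (c : K) : xi != c%:A.
  by apply: contraTneq f_xi => ->; rewrite fmorph_root irredp_noroot ?size_quad_poly.
move=> xi_alg; exact: (computes_product_ge3 xi_notin_K n_gt0 xi_alg).
Qed.
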